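(* Let $\Theta\subseteq\mathbb{R}^p$ be convex and bounded with diameter $R\triangleq\max_{\theta_1,\theta_2\in\Theta}\|\theta_1-\theta_2\|_2$, and let $f:\mathbb{R}^p\to\mathbb{R}$ be continuous and convex with minimum $f^\star$ over $\Theta$. Consider the following scheme: given $\theta_0\in\Theta$, for $n\ge1$, let $g_n$ be a majorant function in $\mathcal{S}_{L,L}(f,\theta_{n-1})$; compute $\nu_n\in\operatorname{arg\,min}_{\theta\in\Theta}\big[g_n(\theta)-\frac{L}{2}\|\theta-\theta_{n-1}\|_2^2\big]$; compute $\alpha^\star\in\operatorname{arg\,min}_{\alpha\in[0,1]}g_n(\alpha\nu_n+(1-\alpha)\theta_{n-1})$; set $\theta_n\triangleq\alpha^\star\nu_n+(1-\alpha^\star)\theta_{n-1}$. Then $(f(\theta_n))_{n\ge0}$ converges to $f^\star$ and $$f(\theta_n)-f^\star\le\frac{2LR^2}{n+2}\quad\text{for all }n\ge1.$$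
   Context: First-order surrogates: $g:\mathbb{R}^p\to\mathbb{R}$ belongs to $\mathcal{S}_L(f,\kappa)$ if (a) $g(\theta')\ge f(\theta')$ for all $\theta'\in\operatorname{arg\,min}_{\theta\in\Theta}g(\theta)$, and (b) $h\triangleq g-f$ is differentiable with $L$-Lipschitz gradient, $h(\kappa)=0$, $\nabla h(\kappa)=0$; $\mathcal{S}_{L,\rho}(f,\kappa)$ is the subset of $\rho$-strongly convex elements. A majorant function satisfies $g\ge f$ everywhere. The minimizers are assumed to exist. *)

From HB Require Import structures.
From mathcomp Require Import all_boot all_order all_algebra.
From mathcomp Require Import all_classical all_reals all_analysis.
Set Implicit Arguments. Unset Strict Implicit. Unset Printing Implicit Defensive.
Import Order.TTheory GRing.Theory Num.Theory.
Import numFieldNormedType.Exports.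
Local Open Scope classical_set_scope.
Local Open Scope ring_scope.

Section Defs.
Variables (R : realType) (p : nat).
Notation V := 'rV[R]_p.

Definition dotp (u v : V) : R := \sum_(i < p) u ord0 i * v ord0 i.
Definition norm2 (u : V) : R := Num.sqrt (dotp u u).

Definition grad (h : V -> R) (x : V) : V := \row_(i < p) ('d h x (delta_mx 0 i)).

Definition cvx_set (T : set V) : Prop :=
  forall x y t, T x -> T y -> 0 <= t <= 1 -> T (t *: x + (1 - t) *: y).

Definition cvx_fun (g : V -> R) : Prop :=
  forall x y t, 0 <= t <= 1 -> g (t *: x + (1 - t) *: y) <= t * g x + (1 - t) * g y.

Definition strongly_convex (rho : R) (g : V -> R) : Prop :=
  cvx_fun (fun x => g x - rho / 2 * norm2 x ^+ 2).

Definition l2_bounded (T : set V) : Prop :=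
  exists M : R, forall x, T x -> norm2 x <= M.

(* R is the diameter sup_{a,b in T} ||a - b||_2 *)
Definition is_diameter (T : set V) (D : R) : Prop :=
  (forall a b, T a -> T b -> norm2 (a - b) <= D) /\
  (forall r, (forall a b, T a -> T b -> norm2 (a - b) <= r) -> D <= r).

Definition is_argmin (T : set V) (g : V -> R) (x : V) : Prop :=
  T x /\ forall y, T y -> g x <= g y.

Definition is_min_value (T : set V) (f : V -> R) (m : R) : Prop :=
  exists x, is_argmin T f x /\ f x = m.

Definition majorant (f g : V -> R) : Prop := forall x, f x <= g x.

Definition first_order_surrogate (T : set V) (L : R) (f : V -> R) (kappa : V)
    (g : V -> R) : Prop :=
  (forall x, is_argmin T g x -> f x <= g x) /\
  (let h := fun x => g x - f x in
   (forall x, differentiable h x) /\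
   (forall x y, norm2 (grad h x - grad h y) <= L * norm2 (x - y)) /\
   h kappa = 0 /\ grad h kappa = 0).

Definition strong_surrogate (T : set V) (L rho : R) (f : V -> R) (kappa : V)
    (g : V -> R) : Prop :=
  first_order_surrogate T L f kappa g /\ strongly_convex rho g.

End Defs.

(** The surrogate [g] minus [L/2 ||. - theta_{n-1}||^2] is convex and, by the
descent lemma for [g - f] (whose gradient is L-Lipschitz and vanishes at
[theta_{n-1}]), lies below [f]; hence its minimiser [nu_n] has value at most
[fstar].  Evaluating [g_n] on the segment [[theta_{n-1}, nu_n]] at any [a] then
gives the Frank-Wolfe type recursion
[f(theta_n) - fstar <= (1 - a) (f(theta_{n-1}) - fstar) + L a^2 R^2 / 2],
and the choice [a = 2/(n+2)] yields the rate [2 L R^2 / (n+2)] by induction. *)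
From HB Require Import structures.
From mathcomp Require Import all_boot all_order all_algebra.
From mathcomp Require Import all_classical all_reals all_analysis.
From mathcomp Require Import ring lra.
Set Implicit Arguments. Unset Strict Implicit. Unset Printing Implicit Defensive.
Import Order.TTheory GRing.Theory Num.Theory.
Import numFieldNormedType.Exports.
Local Open Scope classical_set_scope.
Local Open Scope ring_scope.

Section Euclidean.
Variables (R : realType) (p : nat).
Notation V := 'rV[R]_p.
Implicit Types u v w : V.

Lemma dotpC u v : dotp u v = dotp v u.
Proof. by rewrite /dotp; apply: eq_bigr => i _; rewrite mulrC. Qed.

Lemma dotpDl u v w : dotp (u + v) w = dotp u w + dotp v w.
Proof. by rewrite /dotp -big_split; apply: eq_bigr => i _; rewrite mxE mulrDl. Qed.

Lemma dotpZl a u v : dotp (a *: u) v = a * dotp u v.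
Proof. by rewrite /dotp mulr_sumr; apply: eq_bigr => i _; rewrite mxE mulrA. Qed.

Lemma dotpNl u v : dotp (- u) v = - dotp u v.
Proof. by rewrite -scaleN1r dotpZl mulN1r. Qed.

Lemma dotpBl u v w : dotp (u - v) w = dotp u w - dotp v w.
Proof. by rewrite dotpDl dotpNl. Qed.

Lemma dotp0l v : dotp 0 v = 0.
Proof. by have := dotpZl 0 0 v; rewrite scale0r mul0r. Qed.

Lemma dotpDr u v w : dotp w (u + v) = dotp w u + dotp w v.
Proof. by rewrite dotpC dotpDl !(dotpC w). Qed.

Lemma dotpZr a u v : dotp v (a *: u) = a * dotp v u.
Proof. by rewrite dotpC dotpZl dotpC. Qed.

Lemma dotpBr u v w : dotp w (u - v) = dotp w u - dotp w v.
Proof. by rewrite dotpC dotpBl !(dotpC w). Qed.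

Lemma dotp_ge0 u : 0 <= dotp u u.
Proof. by apply: sumr_ge0 => i _; rewrite -expr2 sqr_ge0. Qed.

Lemma dotp_eq0 u : dotp u u = 0 -> u = 0.
Proof.
move=> /psumr_eq0P u0; apply/rowP => i; rewrite !mxE.
by apply/eqP; rewrite -sqrf_eq0 expr2 u0 // => j _; rewrite -expr2 sqr_ge0.
Qed.

Lemma norm2_ge0 u : 0 <= norm2 u.
Proof. exact: sqrtr_ge0. Qed.

Lemma norm2_sq u : norm2 u ^+ 2 = dotp u u.
Proof. by rewrite /norm2 sqr_sqrtr // dotp_ge0. Qed.

Lemma norm2Z a u : norm2 (a *: u) = `|a| * norm2 u.
Proof.
by rewrite /norm2 dotpZl dotpZr mulrA -expr2 sqrtrM ?sqr_ge0 // sqrtr_sqr.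
Qed.

Lemma norm2_0 : norm2 (0 : V) = 0.
Proof. by have := norm2Z 0 0; rewrite scale0r normr0 mul0r. Qed.

Lemma norm2_eq0 u : norm2 u = 0 -> u = 0.
Proof. by move=> u0; apply: dotp_eq0; rewrite -norm2_sq u0 expr0n. Qed.

Lemma dotp_le_norm2 u v : dotp u v <= norm2 u * norm2 v.
Proof.
have [/norm2_eq0->|/eqP u0] := eqVneq (norm2 u) 0; first by rewrite dotp0l norm2_0 mul0r.
have [/norm2_eq0->|/eqP v0] := eqVneq (norm2 v) 0.
  by rewrite dotpC dotp0l norm2_0 mulr0.
have ab0 : 0 < norm2 u * norm2 v by rewrite mulr_gt0 // lt0r norm2_ge0 andbT; apply/eqP.
have := dotp_ge0 (norm2 v *: u - norm2 u *: v).
rewrite !dotpBl !dotpBr !dotpZl !dotpZr (dotpC v u) -!norm2_sq; nra.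
Qed.

Lemma norm2_segment a u v : norm2 (a *: u + (1 - a) *: v - v) = `|a| * norm2 (u - v).
Proof.
by rewrite -norm2Z scalerBr scalerBl scale1r addrCA addrAC subrr add0r.
Qed.

End Euclidean.

Section Descent.
Variables (R : realType) (p : nat).
Notation V := 'rV[R]_p.

Lemma diff_grad (h : V -> R) x d : 'd h x d = dotp (grad h x) d.
Proof.
rewrite {1}(row_sum_delta d) linear_sum /dotp; apply: eq_bigr => i _.
by rewrite linearZ /= mxE mulrC.
Qed.

Lemma is_derive_line (h : V -> R) x d t : differentiable h (x + t *: d) ->
  is_derive t 1 (fun s : R => h (x + s *: d)) (dotp (grad h (x + t *: d)) d).
Proof.
move=> dh.
have E : (fun s : R => s^-1 *: (((fun s : R => h (x + s *: d)) \o shift t) (s *: 1)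
           - h (x + t *: d))) =
         (fun s : R => s^-1 *: ((h \o shift (x + t *: d)) (s *: d) - h (x + t *: d))).
  apply/funext => s /=; congr (_ *: (h _ - _)).
  by rewrite [_%:A]mulr1 scalerDl addrCA.
split; first by rewrite /derivable E; exact: diff_derivable.
by rewrite /derive E -/(derive h (x + t *: d) d) deriveE // diff_grad.
Qed.

(* Mean value theorem for [s |-> h (k + s d) - L |d|^2 s^2 / 2] on [[0, 1]]: its
   derivative is [<grad h (k + s d) - grad h k, d> - L s |d|^2 <= 0]. *)
Lemma lipschitz_grad_le (h : V -> R) (L : R) k x :
  (forall y, differentiable h y) ->
  (forall y z, norm2 (grad h y - grad h z) <= L * norm2 (y - z)) ->
  h k = 0 -> grad h k = 0 ->
  h x <= L / 2 * norm2 (x - k) ^+ 2.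
Proof.
move=> dh lip hk gk; set d := x - k; set c := L * dotp d d.
pose psi : R -> R := (fun s : R => h (k + s *: d)) - (c / 2) \*: ((@id R) * (@id R)).
pose dpsi s := dotp (grad h (k + s *: d)) d - (c / 2) *: (s *: 1 + s *: 1).
have psi' (s : R) : is_derive s (1 : R) psi (dpsi s).
  by apply: is_deriveB; exact: is_derive_line.
have [xi xi01 mvt] : exists2 xi, xi \in `]0, 1[%R & psi 1 - psi 0 = dpsi xi * (1 - 0).
  apply: MVT => //; apply: derivable_within_continuous => s _.
  exact: (psi' s).(ex_derive).
have xi0 : 0 < xi by move: xi01; rewrite in_itv /= => /andP[].
have grad_near : norm2 (grad h (k + xi *: d) - grad h k) <= L * (xi * norm2 d).
  by rewrite (le_trans (lip _ _)) // addrAC subrr add0r norm2Z ger0_norm // ltW.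
have dpsi_le0 : dpsi xi <= 0.
  have -> : dpsi xi = dotp (grad h (k + xi *: d) - grad h k) d - c * xi.
    by rewrite /dpsi gk subr0 /GRing.scale /= !mulr1; congr (_ - _); field.
  rewrite subr_le0; apply: le_trans (dotp_le_norm2 _ _) _.
  rewrite /c -norm2_sq.
  have := ler_wpM2r (norm2_ge0 d) grad_near; nra.
have kd : k + d = x by rewrite /d addrC subrK.
have psi1 : psi 1 = h (k + 1 *: d) - c / 2 * (1 * 1) by [].
have psi0 : psi 0 = h (k + 0 *: d) - c / 2 * (0 * 0) by [].
rewrite psi1 psi0 scale1r kd scale0r addr0 hk in mvt.
rewrite norm2_sq -/d; rewrite /c in mvt dpsi_le0; nra.
Qed.

End Descent.

Section SurrogateStep.
Variables (R : realType) (p : nat).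
Notation V := 'rV[R]_p.

Lemma strongly_convex_sub_sqdist (g : V -> R) (L : R) k : strongly_convex L g ->
  cvx_fun (fun x => g x - L / 2 * norm2 (x - k) ^+ 2).
Proof.
move=> sc x y t t01; have := sc x y t t01; rewrite /= !norm2_sq.
rewrite !dotpBl !dotpBr !dotpDl !dotpDr !dotpZl !dotpZr (dotpC y x) (dotpC k x) (dotpC k y).
nra.
Qed.

Lemma surrogate_sub_sqdist_le (T : set V) (L : R) (f g : V -> R) k x :
  first_order_surrogate T L f k g -> g x - L / 2 * norm2 (x - k) ^+ 2 <= f x.
Proof.
move=> [_ [dh [lip [hk gk]]]].
have := lipschitz_grad_le x dh lip hk gk; rewrite /=; lra.
Qed.

Variables (T : set V) (D L : R) (f g : V -> R) (xs k nu : V) (alpha : R).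
Hypotheses (diamT : forall a b, T a -> T b -> norm2 (a - b) <= D)
  (xs_min : is_argmin T f xs) (Tk : T k) (L0 : 0 <= L)
  (maj : majorant f g) (surr : strong_surrogate T L L f k g)
  (nu_min : is_argmin T (fun x => g x - L / 2 * norm2 (x - k) ^+ 2) nu)
  (alpha_min : forall a, 0 <= a <= 1 ->
     g (alpha *: nu + (1 - alpha) *: k) <= g (a *: nu + (1 - a) *: k)).

Lemma surrogate_step_le a : 0 <= a <= 1 ->
  f (alpha *: nu + (1 - alpha) *: k) - f xs
    <= (1 - a) * (f k - f xs) + L * D ^+ 2 * a ^+ 2 / 2.
Proof.
move=> a01; have [a0 a1] := andP a01.
have [[_ [_ [_ [hk _]]]] sc] := surr.
have [Tnu nu_le] := nu_min.
set y := a *: nu + (1 - a) *: k.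
have l_nu : g nu - L / 2 * norm2 (nu - k) ^+ 2 <= f xs.
  exact: le_trans (nu_le _ xs_min.1) (surrogate_sub_sqdist_le _ surr.1).
have gk : g k = f k by apply: subr0_eq; exact: hk.
have l_y := strongly_convex_sub_sqdist k sc nu k a01.
rewrite /= subrr norm2_0 expr0n /= mulr0 subr0 gk in l_y.
have dist_y : norm2 (y - k) ^+ 2 <= a ^+ 2 * D ^+ 2.
  rewrite norm2_segment ger0_norm // exprMn ler_wpM2l ?sqr_ge0 //.
  rewrite ler_sqr ?nnegrE ?norm2_ge0 ?diamT //.
  exact: le_trans (norm2_ge0 _) (diamT Tnu Tk).
have f_le_gy : f (alpha *: nu + (1 - alpha) *: k) <= g y.
  exact: le_trans (maj _) (alpha_min a01).
have := ler_wpM2l a0 l_nu; have : 0 <= L / 2 by rewrite divr_ge0.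
nra.
Qed.

End SurrogateStep.

Section Rate.
Variable R : realType.

(* The recursion is used at step [n] with [a = 2 / (n + 2)]. *)
Lemma rate_of_step_recursion (e : nat -> R) (C : R) : 0 <= C ->
  (forall n a, 0 <= a <= 1 -> e n.+1 <= (1 - a) * e n + C * a ^+ 2 / 2) ->
  forall n, (1 <= n)%N -> e n <= 2 * C / (n%:R + 2).
Proof.
move=> C0 rec [//|n] _; elim: n => [|n IH].
  have := rec 0%N 1; rewrite ler01 lexx subrr mul0r add0r expr1n mulr1 => /(_ isT).
  move=> /le_trans->//; rewrite ler_pdivlMr ?mulr1n; lra.
set N : R := n.+1%:R in IH *; have N0 : 0 <= N by rewrite ler0n.
have -> : n.+2%:R = N + 1 :> R by rewrite /N natr1.
set a := 2 / (N + 1 + 2).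
have a01 : 0 <= a <= 1 by apply/andP; split; rewrite ?divr_ge0 ?ler_pdivrMr; lra.
apply: le_trans (rec _ _ a01) _.
have a1 : 0 <= 1 - a by rewrite subr_ge0; case/andP: a01.
apply: le_trans (lerD (ler_wpM2l a1 IH) (lexx _)) _.
rewrite -subr_ge0.
have -> : 2 * C / (N + 1 + 2) - ((1 - a) * (2 * C / (N + 2)) + C * a ^+ 2 / 2)
    = 2 * C / ((N + 2) * (N + 3) ^+ 2).
  by rewrite /a; field; apply/andP; split; lra.
by rewrite divr_ge0 ?mulr_ge0 ?sqr_ge0 //; lra.
Qed.

Lemma cvg_harmonic_bound (u : nat -> R) (l C : R) :
  (forall n, l <= u n) -> (forall n, (1 <= n)%N -> u n - l <= C / (n%:R + 2)) ->
  u @ \oo --> l.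
Proof.
move=> lu ub; apply/cvgrPdist_le => eps eps0; near=> n.
have n1 : (1 <= n)%N by near: n; exists 1%N.
have hn : C / eps < n%:R by near: n; exact: nbhs_infty_gtr.
rewrite distrC ger0_norm ?subr_ge0 //; apply: le_trans (ub n n1) _.
rewrite ltr_pdivrMr // in hn; rewrite ler_pdivrMr ?ltr_wpDl ?ler0n //; lra.
Unshelve. all: by end_near.
Qed.

End Rate.

Theorem proposition4p1 (R : realType) (p : nat) (Theta : set 'rV[R]_p)
    (D : R) (f : 'rV[R]_p -> R) (fstar L : R)
    (theta nu : nat -> 'rV[R]_p) (g : nat -> 'rV[R]_p -> R) (alpha : nat -> R) :
  cvx_set Theta -> l2_bounded Theta -> is_diameter Theta D ->
  continuous f -> cvx_fun f -> is_min_value Theta f fstar ->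
  0 < L ->
  Theta (theta 0%N) ->
  (forall n, (1 <= n)%N ->
     majorant f (g n) /\ strong_surrogate Theta L L f (theta n.-1) (g n)) ->
  (forall n, (1 <= n)%N ->
     is_argmin Theta (fun x => g n x - L / 2 * norm2 (x - theta n.-1) ^+ 2) (nu n)) ->
  (forall n, (1 <= n)%N ->
     0 <= alpha n <= 1 /\
     forall a, 0 <= a <= 1 ->
       g n (alpha n *: nu n + (1 - alpha n) *: theta n.-1)
         <= g n (a *: nu n + (1 - a) *: theta n.-1)) ->
  (forall n, (1 <= n)%N -> theta n = alpha n *: nu n + (1 - alpha n) *: theta n.-1) ->
  (fun n => f (theta n)) @ \oo --> fstar /\
  (forall n, (1 <= n)%N -> f (theta n) - fstar <= 2 * L * D ^+ 2 / (n%:R + 2)).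
Proof.
move=> Tcvx _ [diamT _] _ _ [xs [xs_min <-]] L0 T0 Hg Hnu Halpha Htheta.
have Tall n : Theta (theta n).
  by elim: n => // n IH; rewrite Htheta //; apply: Tcvx (Hnu _ _).1 IH (Halpha _ _).1.
have step n a : 0 <= a <= 1 -> f (theta n.+1) - f xs
    <= (1 - a) * (f (theta n) - f xs) + L * D ^+ 2 * a ^+ 2 / 2.
  have /= [maj surr] := Hg n.+1 erefl.
  have /= nu_min := Hnu n.+1 erefl; have /= [_ alpha_min] := Halpha n.+1 erefl.
  rewrite Htheta //.
  exact: (surrogate_step_le diamT xs_min (Tall n) (ltW L0) maj surr nu_min alpha_min).
have rate := rate_of_step_recursion (mulr_ge0 (ltW L0) (sqr_ge0 D)) step.
split; last by move=> n n1; rewrite mulrA in rate; exact: rate.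
by apply: cvg_harmonic_bound rate => n; exact: xs_min.2.
Qed.
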